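(* Let $X$ be a compact zero-dimensional metric space, $X_{\max},X_{\min}\subseteq X$ closed subsets, and $\varphi:X\setminus X_{\max}\to X\setminus X_{\min}$ a homeomorphism. Then the following are equivalent: (i) for every clopen $U\subseteq X$ with $X_{\min}\subseteq U$, $\bigcup_{n=0}^{\infty}\varphi^n(U)=X$; (ii) for every clopen $V\subseteq X$ with $X_{\max}\subseteq V$, $\bigcup_{n=0}^{\infty}\varphi^{-n}(V)=X$.
   Context: For $n\in\mathbb{Z}$, $\varphi^n$ denotes the $n$-fold composite of $\varphi$ (of $\varphi^{-1}$ if $n<0$) on its natural domain, $\varphi^0=\mathrm{id}_X$, and for $U\subseteq X$, $\varphi^n(U)=\varphi^n(U\cap\mathrm{dom}\,\varphi^n)$. *)

From HB Require Import structures.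
From mathcomp Require Import all_boot all_order all_algebra.
From mathcomp Require Import all_classical all_reals all_analysis.
Set Implicit Arguments. Unset Strict Implicit. Unset Printing Implicit Defensive.
Local Open Scope classical_set_scope.

(* Image of U under the n-fold composite of a partial map f whose domain is
   the complement of D:  f^n(U) = f^n(U ∩ dom f^n), where
   dom f^n = { x | f^k x ∉ D for all k < n }. *)
Definition iter_image {T : Type} (f : T -> T) (D : set T) (n : nat) (U : set T)
  : set T :=
  [set iter n f x | x in [set x | U x /\ (forall k, (k < n)%N -> ~ D (iter k f x))]].

(* Suppose (i) holds and some x is in no psi^n(V). Then the whole forward
   orbit of x avoids V, so it stays in the compact set W = X \ V, which lies in
   the domain of phi. The compact set phi(W) misses Xmin, so zero-dimensionality
   gives a clopen U containing Xmin and disjoint from phi(W). By (i) the sets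
   phi^n(U) cover X. They are open, being the sets of points whose first n
   psi-iterates avoid Xmin and whose n-th psi-iterate lies in U, so finitely
   many of them cover X, say those with n <= N.
   The point phi^(N+1)(x) then lies in some phi^k(U) with k <= N, i.e.
   phi(phi^(N-k)(x)) lies in U, although phi^(N-k)(x) is in W. The converse
   is the same argument applied to psi. *)

From HB Require Import structures.
From mathcomp Require Import all_boot all_order all_algebra.
From mathcomp Require Import all_classical all_reals all_analysis.
From mathcomp Require Import zify finmap.
Set Implicit Arguments. Unset Strict Implicit.
Local Open Scope classical_set_scope.

Definition iter_dom (T : Type) (h : T -> T) (C : set T) (n : nat) : set T :=
  [set x | forall k, (k < n)%N -> ~ C (iter k h x)].

Lemma iter_dom0 (T : Type) (h : T -> T) (C : set T) : iter_dom h C 0 = setT.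
Proof. by apply/seteqP; split. Qed.

Lemma iter_domS (T : Type) (h : T -> T) (C : set T) n :
  iter_dom h C n.+1 = ~` C `&` h @^-1` iter_dom h C n.
Proof.
apply/seteqP; split => x.
- move=> hx; split; first exact: (hx 0%N).
  by move=> k kn /=; rewrite -iterSr; apply: hx.
- by case=> Cx hx [|k] kn //; rewrite iterSr; apply: hx.
Qed.

Section partial_bijection.
Variables (T : Type) (f g : T -> T) (A B : set T).
Hypotheses (fAB : forall x, ~ A x -> ~ B (f x))
           (fK : forall x, ~ A x -> g (f x) = x).

Lemma iter_cancel n x j : iter_dom f A n x -> (j <= n)%N ->
  iter j g (iter n f x) = iter (n - j) f x.
Proof.
move=> dx; elim: j => [|j IH] jn; first by rewrite subn0.
rewrite iterS IH ?(ltnW jn) // -(subnSK jn) iterS fK //.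
by apply: dx; lia.
Qed.

Lemma iter_dom_iter n x : iter_dom f A n x ->
  iter_dom g B n (iter n f x) /\ iter n g (iter n f x) = x.
Proof.
move=> dx; split; last by rewrite iter_cancel // subnn.
move=> j jn; rewrite (iter_cancel dx (ltnW jn)) -(subnSK jn) iterS.
by apply/fAB/dx; lia.
Qed.

End partial_bijection.

Lemma iter_imageE (T : Type) (f g : T -> T) (A B : set T) :
  (forall x, ~ A x -> ~ B (f x)) -> (forall y, ~ B y -> ~ A (g y)) ->
  (forall x, ~ A x -> g (f x) = x) -> (forall y, ~ B y -> f (g y) = y) ->
  forall n U, iter_image f A n U = iter_dom g B n `&` iter n g @^-1` U.
Proof.
move=> fAB gBA fK gK n U; apply/seteqP; split => y.
- case=> x [Ux dx] <-; have [dy fxK] := iter_dom_iter fAB fK dx.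
  by split => //=; rewrite fxK.
- case=> dy Uy; have [dx fgy] := iter_dom_iter gBA gK dy.
  by exists (iter n g y).
Qed.

Lemma open_iter_preimage (T : topologicalType) (g : T -> T) (B U : set T) n :
  closed B -> {within ~` B, continuous g} -> open U ->
  open (iter_dom g B n `&` iter n g @^-1` U).
Proof.
move=> cB cg oU; elim: n => [|n IH]; first by rewrite iter_dom0 setTI.
have oB : open (~` B) := closed_openC cB.
have cgB : {in ~` B, continuous g} by rewrite -continuous_open_subspace.
suff -> : iter_dom g B n.+1 `&` iter n.+1 g @^-1` U =
          ~` B `&` g @^-1` (iter_dom g B n `&` iter n g @^-1` U).
  exact: (continuous_inP _ oB).1 cgB _ IH.
rewrite iter_domS preimage_setI -setIA; congr (_ `&` (_ `&` _)).
by apply/funext => y; rewrite /preimage /= -iterSr.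
Qed.

(* [compact_cover] is only stated for pointed spaces; a point of A provides
   the pointed structure. *)
Definition pointed_at (T : topologicalType) (x : T) : Type := T.
HB.instance Definition _ (T : topologicalType) (x : T) :=
  Topological.copy (@pointed_at T x) T.
HB.instance Definition _ (T : topologicalType) (x : T) :=
  isPointed.Build (@pointed_at T x) x.

Lemma compact_cover_compact (T : topologicalType) (A : set T) :
  compact A -> cover_compact A.
Proof.
move=> cA I D F oF AF; have [[x _]|A0] := pselect (A !=set0).
  by have : @compact (pointed_at x) A by []; rewrite compact_cover; apply.
by exists fset0 => // y Ay; case: A0; exists y.
Qed.

Lemma open_cover_nat_bounded (T : topologicalType) (S : nat -> set T) :
  compact [set: T] -> (forall n, open (S n)) ->
  \bigcup_(n in [set: nat]) S n = [set: T] ->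
  exists N, forall y, exists2 k, (k <= N)%N & S k y.
Proof.
move=> cT oS cov.
have TS : [set: T] `<=` \bigcup_(n in [set: nat]) S n by rewrite cov.
have [D _ TD] := compact_cover_compact cT (fun n _ => oS n) TS.
exists (\max_(i <- D) i)%N => y; have [k /= Dk Sky] := TD y I.
by exists k => //; exact: (leq_bigmax_seq (F := id) k Dk isT).
Qed.

Lemma clopen_nbhs_disjoint (T : topologicalType) (L : set T) p :
  hausdorff_space T -> compact [set: T] -> zero_dimensional T ->
  closed L -> ~ L p -> exists C, [/\ clopen C, C p & C `&` L = set0].
Proof.
move=> hT cT zT cL Lp.
have nL : nbhs p (~` L) by apply: open_nbhs_nbhs; split => //; exact: closed_openC.
have [C [Cp clC] CL] := zero_dimensional_cvg hT zT cT nL.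
by exists C; split => //; apply/disjoints_subset.
Qed.

Lemma clopen_separation (T : topologicalType) (K L : set T) :
  hausdorff_space T -> compact [set: T] -> zero_dimensional T ->
  compact K -> closed L -> K `&` L = set0 ->
  exists U, [/\ clopen U, K `<=` U & U `&` L = set0].
Proof.
move=> hT cT zT cK cL KL.
have nbC p : exists C, [/\ clopen C, C `&` L = set0 & (K p -> C p)].
  have [Kp|Kp] := pselect (K p); last first.
    by exists set0; split => //; [exact: clopen0 | rewrite set0I].
  have Lp : ~ L p by move=> Lp; have : (K `&` L) p by []; rewrite KL.
  by have [C [? ? ?]] := clopen_nbhs_disjoint hT cT zT cL Lp; exists C.
have [C HC] := choice nbC.
have oC i : K i -> open (C i) by case: (HC i) => -[].
have KC : K `<=` cover K C by move=> p Kp; exists p => //; case: (HC p) => _ _; apply.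
have [D _ KD] := compact_cover_compact cK oC KC.
exists (\bigcup_(i in [set` D]) C i); split => //.
- split; first by apply: bigcup_open => i _; case: (HC i) => -[].
  by apply: closed_bigcup => [|i _]; [exact: finite_fset | case: (HC i) => -[]].
- by rewrite setI_bigcupl; apply: bigcup0 => i _; case: (HC i).
Qed.

Section forward_backward.
Variables (T : topologicalType) (Xmax Xmin : set T) (phi psi : T -> T).
Hypotheses (hT : hausdorff_space T) (cT : compact [set: T])
           (zT : zero_dimensional T)
           (cmin : closed Xmin)
           (phi_max : forall x, ~ Xmax x -> ~ Xmin (phi x))
           (psi_min : forall y, ~ Xmin y -> ~ Xmax (psi y))
           (phiK : forall x, ~ Xmax x -> psi (phi x) = x)
           (psiK : forall y, ~ Xmin y -> phi (psi y) = y)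
           (cphi : {within ~` Xmax, continuous phi})
           (cpsi : {within ~` Xmin, continuous psi}).

Lemma forward_orbit_avoids (V : set T) x : Xmax `<=` V ->
  ~ (\bigcup_(n in [set: nat]) iter_image psi Xmin n V) x ->
  forall n, ~ V (iter n phi x).
Proof.
move=> XV xV; elim/ltn_ind => n IH Vn; apply: xV; exists n => //.
rewrite (iter_imageE psi_min phi_max psiK phiK); split => // k kn.
by move/XV; apply: IH.
Qed.

Lemma clopen_forward_cover_bounded U :
  clopen U -> \bigcup_(n in [set: nat]) iter_image phi Xmax n U = [set: T] ->
  exists N, forall y, exists2 k, (k <= N)%N & iter_image phi Xmax k U y.
Proof.
move=> clU; apply: open_cover_nat_bounded => // n.
rewrite (iter_imageE phi_max psi_min phiK psiK).
exact: open_iter_preimage cmin cpsi clU.1.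
Qed.

Lemma backward_cover_of_forward_cover :
  (forall U : set T, clopen U -> Xmin `<=` U ->
      \bigcup_(n in [set: nat]) iter_image phi Xmax n U = [set: T]) ->
  (forall V : set T, clopen V -> Xmax `<=` V ->
      \bigcup_(n in [set: nat]) iter_image psi Xmin n V = [set: T]).
Proof.
move=> fwd V [oV _] XV; apply/seteqP; split => // x _.
apply: contrapT => /(forward_orbit_avoids XV) orbV.
have domx n : iter_dom phi Xmax n x by move=> j _ /XV; apply: orbV.
pose W := ~` V.
have WX : W `<=` ~` Xmax by move=> w Vw /XV.
have cW : compact W.
  by apply: (subclosed_compact _ cT) => //; exact: open_closedC.
have cphiW : compact (phi @` W).
  exact/continuous_compact/cW/(continuous_subspaceW WX).
have minW : Xmin `&` phi @` W = set0.
  apply/seteqP; split => // y [Xy [w Vw wy]].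
  by case: (phi_max (WX _ Vw)); rewrite wy.
have [U [clU XU UW]] := clopen_separation hT cT zT
  (subclosed_compact cmin cT (@subsetT _ _)) (compact_closed hT cphiW) minW.
have [N UN] := clopen_forward_cover_bounded clU (fwd U clU XU).
have [k kN] := UN (iter N.+1 phi x).
rewrite (iter_imageE phi_max psi_min phiK psiK) => -[_] /=.
rewrite (iter_cancel phiK (domx _) (leqW kN)) subSn // iterS => Uk.
suff : (U `&` phi @` W) (phi (iter (N - k) phi x)) by rewrite UW.
by split => //; exists (iter (N - k) phi x) => //; exact: orbV.
Qed.

End forward_backward.

Theorem proposition4p5 (R : realType) (X : pseudoMetricType R)
  (Xmax Xmin : set X) (phi psi : X -> X) :
  hausdorff_space X -> compact [set: X] -> zero_dimensional X ->
  closed Xmax -> closed Xmin ->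
  (forall x, ~ Xmax x -> ~ Xmin (phi x)) ->
  (forall y, ~ Xmin y -> ~ Xmax (psi y)) ->
  (forall x, ~ Xmax x -> psi (phi x) = x) ->
  (forall y, ~ Xmin y -> phi (psi y) = y) ->
  {within ~` Xmax, continuous phi} ->
  {within ~` Xmin, continuous psi} ->
  ((forall U : set X, clopen U -> Xmin `<=` U ->
      \bigcup_(n in [set: nat]) iter_image phi Xmax n U = [set: X]) <->
   (forall V : set X, clopen V -> Xmax `<=` V ->
      \bigcup_(n in [set: nat]) iter_image psi Xmin n V = [set: X])).
Proof.
move=> hT cT zT cmax cmin phi_max psi_min phiK psiK cphi cpsi; split.
- exact: backward_cover_of_forward_cover.
- exact: (backward_cover_of_forward_cover hT cT zT cmax
            psi_min phi_max psiK phiK cpsi cphi).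
Qed.
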